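(* Let $X$ be a nonnegative integer-valued random variable whose PGF $X(z)$ has radius of convergence $r>1$, with mean $\mu=X'(1)>0$ and variance $\sigma^2>0$, such that $|X(z)|<X(r_1)$ whenever $|z|=r_1$, $z\ne r_1$, $r_1\in(0,r)$. For positive integers $n,s$ let $A(z)=X(z)^n$, $\mu_A=n\mu<s$, with degree of $X(z)$ larger than $s/n$, and let $Z_0$ be the zero of $z^s-A(z)$ of minimal modulus in $1<|z|<r$. Suppose $\frac{n\mu}{s}=1-\frac{\gamma}{\sqrt s}$ with $\gamma$ bounded away from $0$ and $\infty$ as $s\to\infty$. Then $$-\frac{s-\mu_A}{sZ_0^{s-1}-A'(Z_0)}=\Big(\frac{1}{Z_0}\Big)^{s-1}\big(1+O(s^{-1/2})\big),\qquad s\to\infty.$$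
   Context: $\sigma^2=X''(1)-X'(1)^2+X'(1)$. $O$-terms refer to $s\to\infty$ with constants independent of $s$. *)

From Stdlib Require Import Reals.
From Coquelicot Require Import Coquelicot.
Open Scope R_scope.

Definition is_pmf (p : nat -> R) : Prop :=
  (forall k, 0 <= p k) /\ is_series p 1.

(* Complex value of the PGF  X(z) = sum_k p_k z^k  (real and imaginary parts
   summed separately; meaningful inside the disc of convergence). *)
Definition pgf (p : nat -> R) (z : C) : C :=
  (Series (fun k => p k * fst (Cpow z k)), Series (fun k => p k * snd (Cpow z k))).

Definition pgf_deriv (p : nat -> R) (z : C) : C :=
  (Series (fun k => INR (S k) * p (S k) * fst (Cpow z k)),
   Series (fun k => INR (S k) * p (S k) * snd (Cpow z k))).

Definition pgfR (p : nat -> R) (x : R) : R := Series (fun k => p k * x ^ k).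

Definition pgf_mean (p : nat -> R) : R := Series (fun k => INR k * p k).

Definition pgf_var (p : nat -> R) : R :=
  Series (fun k => INR k * (INR k - 1) * p k) - pgf_mean p ^ 2 + pgf_mean p.

(* "degree of X(z) larger than t": some k > t with p_k > 0 (degree may be infinite) *)
Definition pgf_deg_gt (p : nat -> R) (t : R) : Prop :=
  exists k : nat, 0 < p k /\ t < INR k.

(** Let k(t) = ln X(e^t) be the cumulant generating function: k(0) = 0, k'(0) = mu,
    k''(0) = sigma^2, and k''' is bounded near 0. A real point e^t is a root of
    z^s = X(z)^n iff n k(t) = s t. Writing s = n (mu + q), the condition on gamma makes q of
    order s^(-1/2), and Taylor's formula gives n k(t) - s t < 0 on (0, q/sigma^2] and > 0 at
    4q/sigma^2, hence a real root below e^(4q/sigma^2). Since |X(z)| < X(|z|) off the positive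
    axis, the root Z0 of minimal modulus is this real root e^u, so u < 4q/sigma^2. At a real
    root the quotient equals Z0^(-(s-1)) (s - n mu) / (n k'(u) - s), and the trapezoidal rule
    for k on [0, u], both ends being zeros of n k(t) - s t, gives
    |(n k'(u) - s) - (s - n mu)| <= n sup|k'''| u^2 = O(1), while s - n mu is of order sqrt s. *)

From Stdlib Require Import Reals Lra Psatz Classical.
From Coquelicot Require Import Coquelicot.
Open Scope R_scope.

(** * Calculus on an interval *)

Lemma continuity_pt_is_derive (g : R -> R) x l : is_derive g x l -> continuity_pt g x.
Proof.
  intros H. apply continuity_pt_filterlim.
  apply (ex_derive_continuous (K := R_AbsRing) (V := R_NormedModule)). now exists l.
Qed.

Lemma exp_le_exp x y : x <= y -> exp x <= exp y.
Proof. intros [H|<-]; [left; apply exp_increasing, H|right; reflexivity]. Qed.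

Lemma mvt_bound (g g' : R -> R) a b K : a <= b ->
  (forall x, a <= x <= b -> is_derive g x (g' x)) ->
  (forall x, a <= x <= b -> Rabs (g' x) <= K) -> Rabs (g b - g a) <= K * (b - a).
Proof.
  intros Hab Hd Hb. destruct (Req_dec a b) as [<-|Hne].
  - rewrite Rminus_diag, Rabs_R0, Rminus_diag, Rmult_0_r. lra.
  - destruct (MVT_gen g a b g') as (c & Hc & E);
      rewrite ?Rmin_left, ?Rmax_right in * by lra.
    + intros x Hx. apply Hd. lra.
    + intros x Hx. eapply continuity_pt_is_derive, Hd, Hx.
    + rewrite E, Rabs_mult, (Rabs_pos_eq (b - a)) by lra.
      apply Rmult_le_compat_r; [lra|]. apply Hb, Hc.
Qed.

Section ThirdOrderBounds.
Variables (g g' g'' g''' : R -> R) (u K : R).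
Hypothesis u_nonneg : 0 <= u.
Hypothesis g_derivatives : forall x, 0 <= x <= u ->
  is_derive g x (g' x) /\ is_derive g' x (g'' x) /\ is_derive g'' x (g''' x).
Hypothesis g'''_bound : forall x, 0 <= x <= u -> Rabs (g''' x) <= K.

Let is_derive_g x (Hx : 0 <= x <= u) := proj1 (g_derivatives x Hx).
Let is_derive_g' x (Hx : 0 <= x <= u) := proj1 (proj2 (g_derivatives x Hx)).
Let is_derive_g'' x (Hx : 0 <= x <= u) := proj2 (proj2 (g_derivatives x Hx)).

Let Derive_g x : 0 <= x <= u -> Derive (fun y => g y) x = g' x.
Proof. intros Hx. apply is_derive_unique, is_derive_g, Hx. Qed.

Let Derive_g' x : 0 <= x <= u -> Derive (fun y => g' y) x = g'' x.
Proof. intros Hx. apply is_derive_unique, is_derive_g', Hx. Qed.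

Let Derive_g'' x : 0 <= x <= u -> Derive (fun y => g'' y) x = g''' x.
Proof. intros Hx. apply is_derive_unique, is_derive_g'', Hx. Qed.

Let K_nonneg : 0 <= K.
Proof. pose proof (g'''_bound 0 ltac:(lra)). pose proof (Rabs_pos (g''' 0)). lra. Qed.

Lemma taylor2_bound : Rabs (g u - g 0 - g' 0 * u - g'' 0 * u ^ 2 / 2) <= K * u ^ 3.
Proof.
  assert (Hg'' : forall w, 0 <= w <= u -> Rabs (g'' w - g'' 0) <= K * w).
  { intros w Hw. replace (K * w) with (K * (w - 0)) by ring.
    apply (mvt_bound g'' g'''); [lra| |]; intros x Hx; [apply is_derive_g''|apply g'''_bound]; lra. }
  assert (Hg' : forall w, 0 <= w <= u -> Rabs (g' w - g' 0 - g'' 0 * w) <= K * w ^ 2).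
  { intros w Hw.
    replace (g' w - g' 0 - g'' 0 * w) with ((g' w - g'' 0 * w) - (g' 0 - g'' 0 * 0)) by ring.
    replace (K * w ^ 2) with (K * w * (w - 0)) by ring.
    apply (mvt_bound (fun y => g' y - g'' 0 * y) (fun y => g'' y - g'' 0)); [lra| |].
    - intros x Hx. auto_derive; [eexists; apply is_derive_g'; lra|].
      rewrite Derive_g' by lra. ring.
    - intros x Hx. specialize (Hg'' x ltac:(lra)).
      assert (K * x <= K * w) by (apply Rmult_le_compat_l; lra).
      lra. }
  replace (g u - g 0 - g' 0 * u - g'' 0 * u ^ 2 / 2) with
    ((g u - g' 0 * u - g'' 0 * u ^ 2 / 2) - (g 0 - g' 0 * 0 - g'' 0 * 0 ^ 2 / 2)) by field.
  replace (K * u ^ 3) with (K * u ^ 2 * (u - 0)) by ring.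
  apply (mvt_bound (fun y => g y - g' 0 * y - g'' 0 * y ^ 2 / 2)
                   (fun y => g' y - g' 0 - g'' 0 * y)); [lra| |].
  - intros x Hx. auto_derive; [eexists; apply is_derive_g; lra|].
    rewrite Derive_g by lra. field.
  - intros x Hx. specialize (Hg' x Hx).
    assert (K * x ^ 2 <= K * u ^ 2); [|lra].
    apply Rmult_le_compat_l; [exact K_nonneg|apply pow_incr; lra].
Qed.

Lemma trapezoid_bound : Rabs (u * (g' 0 + g' u) - 2 * (g u - g 0)) <= K * u ^ 3.
Proof.
  set (T' := fun v => g' 0 - g' v + v * g'' v).
  assert (HT' : forall v, 0 <= v <= u -> Rabs (T' v) <= K * u * u).
  { intros v Hv. replace (T' v) with (T' v - T' 0) by (unfold T'; ring).
    apply Rle_trans with (K * u * (v - 0)); [|apply Rmult_le_compat_l; nra].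
    apply (mvt_bound T' (fun w => w * g''' w)); [lra| |].
    - intros x Hx. unfold T'. auto_derive.
      + split; [eexists; apply is_derive_g'|split; [eexists; apply is_derive_g''|]]; auto; lra.
      + rewrite Derive_g', Derive_g'' by lra. ring.
    - intros x Hx. rewrite Rabs_mult, (Rabs_pos_eq x) by lra.
      specialize (g'''_bound x ltac:(lra)). pose proof (Rabs_pos (g''' x)). nra. }
  set (T := fun v => v * (g' 0 + g' v) - 2 * g v).
  replace (u * (g' 0 + g' u) - 2 * (g u - g 0)) with (T u - T 0) by (unfold T; ring).
  replace (K * u ^ 3) with (K * u * u * (u - 0)) by ring.
  apply (mvt_bound T T'); [lra| |exact HT'].
  intros x Hx. unfold T, T'. auto_derive.
  - split; [eexists; apply is_derive_g'|split; [eexists; apply is_derive_g|]]; auto; lra.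
  - rewrite Derive_g', Derive_g by lra. ring.
Qed.

End ThirdOrderBounds.

Section LineCrossing.
Variables (k : R -> R) (mu sg M U q : R).
Hypothesis sg_pos : 0 < sg.
Hypothesis M_nonneg : 0 <= M.
Hypothesis q_pos : 0 < q.
Hypothesis k_taylor2 : forall t, 0 <= t <= U -> Rabs (k t - mu * t - sg * t ^ 2 / 2) <= M * t ^ 3.

Lemma below_line t : 0 < t <= q / sg -> t <= U -> 2 * M * q < sg ^ 2 -> k t < (mu + q) * t.
Proof.
  intros Ht HtU Hq. assert (Hk := k_taylor2 t ltac:(lra)). apply Rabs_le_between in Hk.
  assert (Hsgt : sg * t <= q).
  { replace q with (sg * (q / sg)) by (field; lra). apply Rmult_le_compat_l; lra. }
  assert (HMt : 2 * M * t ^ 2 < q).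
  { apply (Rmult_lt_reg_r (sg ^ 2)); [nra|].
    assert (M * (sg * t) ^ 2 <= M * q ^ 2) by (apply Rmult_le_compat_l; [lra|apply pow_incr; nra]).
    nra. }
  nra.
Qed.

Lemma above_line : 16 * M * q < sg ^ 2 -> 4 * q / sg <= U -> (mu + q) * (4 * q / sg) < k (4 * q / sg).
Proof.
  intros Hq HU. set (t := 4 * q / sg) in *.
  assert (Ht : t * sg = 4 * q) by (unfold t; field; lra).
  assert (Htpos : 0 < t) by (unfold t; apply Rdiv_lt_0_compat; lra).
  assert (Hk := k_taylor2 t ltac:(lra)). apply Rabs_le_between in Hk.
  assert (HMt : M * t ^ 2 < q).
  { apply (Rmult_lt_reg_r (sg ^ 2)); [nra|].
    replace (M * t ^ 2 * sg ^ 2) with (M * (t * sg) ^ 2) by ring. rewrite Ht. nra. }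
  nra.
Qed.

End LineCrossing.

(** * The cumulant generating function *)

Lemma CV_radius_iter_derive (a : nat -> R) (k : nat) :
  CV_radius (Nat.iter k PS_derive a) = CV_radius a.
Proof. induction k as [|k IH]; [reflexivity|]. simpl. now rewrite CV_radius_derive. Qed.

(* For X = PSeries a, [mom a k t] is e^(kt) X^(k)(e^t); since
   d/dt mom a k = k mom a k + mom a (k+1), the derivatives of ln X(e^t) are rational in them. *)
Definition mom (a : nat -> R) (k : nat) (t : R) : R :=
  exp t ^ k * PSeries (Nat.iter k PS_derive a) (exp t).

Lemma is_derive_mom (a : nat -> R) (k : nat) (t : R) :
  Rbar_lt (exp t) (CV_radius a) ->
  is_derive (mom a k) t (INR k * mom a k t + mom a (S k) t).
Proof.
  intros Hr.
  assert (Hr' : Rbar_lt (Rabs (exp t)) (CV_radius (Nat.iter k PS_derive a))).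
  { rewrite CV_radius_iter_derive, Rabs_pos_eq by (left; apply exp_pos). exact Hr. }
  unfold mom. auto_derive.
  - apply ex_derive_PSeries, Hr'.
  - rewrite Derive_PSeries by exact Hr'. simpl.
    destruct k as [|k]; simpl; ring.
Qed.

Lemma mom0 (a : nat -> R) t : mom a 0 t = PSeries a (exp t).
Proof. unfold mom. simpl. ring. Qed.

Lemma PSeries_le_mono (a : nat -> R) x y : (forall k, 0 <= a k) -> 0 <= x <= y ->
  Rbar_lt y (CV_radius a) -> PSeries a x <= PSeries a y.
Proof.
  intros Ha Hxy Hy. apply Series_le.
  - intros k. split.
    + apply Rmult_le_pos; [apply Ha|apply pow_le; lra].
    + apply Rmult_le_compat_l; [apply Ha|apply pow_incr; lra].
  - apply ex_series_Rabs, CV_disk_inside. rewrite Rabs_pos_eq by lra. exact Hy.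
Qed.

Lemma exists_exp_lt_radius (a : nat -> R) : Rbar_lt 1 (CV_radius a) ->
  exists U, 0 < U /\ Rbar_lt (exp U) (CV_radius a).
Proof.
  intros Hr. assert (Hrho : exists rho, 1 < rho /\ Rbar_lt rho (CV_radius a)).
  { destruct (CV_radius a) as [r| |]; simpl in *.
    - exists ((1 + r) / 2). split; lra.
    - exists 2. split; [lra|exact I].
    - contradiction. }
  destruct Hrho as (rho & Hrho & Hlt). exists (ln rho). split.
  - rewrite <- ln_1. apply ln_increasing; lra.
  - rewrite exp_ln by lra. exact Hlt.
Qed.

Section Cumulant.
Variable a : nat -> R.

Definition cgf (t : R) : R := ln (mom a 0 t).
Definition cgf' (t : R) : R := mom a 1 t / mom a 0 t.
Definition cgf'' (t : R) : R := (mom a 1 t + mom a 2 t) / mom a 0 t - cgf' t ^ 2.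
Definition cgf''' (t : R) : R :=
  (mom a 1 t + 3 * mom a 2 t + mom a 3 t) / mom a 0 t
  - (mom a 1 t + mom a 2 t) * mom a 1 t / mom a 0 t ^ 2 - 2 * cgf' t * cgf'' t.

Variable t : R.
Hypothesis t_radius : Rbar_lt (exp t) (CV_radius a).
Hypothesis mom0_pos : 0 < mom a 0 t.

Let ex_derive_mom k : ex_derive (mom a k) t.
Proof. eexists; apply is_derive_mom, t_radius. Qed.

Let Derive_mom k : Derive (fun x => mom a k x) t = INR k * mom a k t + mom a (S k) t.
Proof. apply is_derive_unique, is_derive_mom, t_radius. Qed.

Lemma is_derive_cgf : is_derive cgf t (cgf' t).
Proof.
  unfold cgf, cgf'. auto_derive; [auto|]. rewrite Derive_mom. simpl. field. lra.
Qed.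

Lemma is_derive_cgf' : is_derive cgf' t (cgf'' t).
Proof.
  unfold cgf'', cgf'. auto_derive; [repeat split; auto; lra|]. rewrite !Derive_mom. simpl. field. lra.
Qed.

Lemma is_derive_cgf'' : is_derive cgf'' t (cgf''' t).
Proof.
  unfold cgf''', cgf'', cgf'. auto_derive; [repeat split; auto; lra|].
  rewrite !Derive_mom. simpl. field. lra.
Qed.

Lemma ex_derive_cgf''' : ex_derive cgf''' t.
Proof. unfold cgf''', cgf'', cgf'. auto_derive. repeat split; auto; nra. Qed.

End Cumulant.

Lemma cgf'_PSeries (a : nat -> R) t :
  cgf' a t = exp t * PSeries (PS_derive a) (exp t) / PSeries a (exp t).
Proof. unfold cgf'. rewrite mom0. unfold mom. simpl. rewrite Rmult_1_r. reflexivity. Qed.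

Section NormalizedPSeries.
Variable a : nat -> R.
Hypothesis a_nonneg : forall k, 0 <= a k.
Hypothesis a_total : PSeries a 1 = 1.

Lemma PSeries_ge_1 x : 1 <= x -> Rbar_lt x (CV_radius a) -> 1 <= PSeries a x.
Proof.
  intros Hx Hr. rewrite <- a_total. apply PSeries_le_mono; [exact a_nonneg|lra|exact Hr].
Qed.

Lemma mom0_ge_1 t : 0 <= t -> Rbar_lt (exp t) (CV_radius a) -> 1 <= mom a 0 t.
Proof.
  intros Ht Hr. rewrite mom0. apply PSeries_ge_1; [|exact Hr].
  rewrite <- exp_0. apply exp_le_exp. exact Ht.
Qed.

Lemma cgf_0 : cgf a 0 = 0.
Proof. unfold cgf. rewrite mom0, exp_0, a_total. apply ln_1. Qed.

Variable U : R.
Hypothesis U_radius : Rbar_lt (exp U) (CV_radius a).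

Let radius_on t : t <= U -> Rbar_lt (exp t) (CV_radius a).
Proof.
  intros Ht. eapply Rbar_le_lt_trans; [|exact U_radius]. apply exp_le_exp. exact Ht.
Qed.

Lemma cgf_derivatives_on t : 0 <= t <= U ->
  is_derive (cgf a) t (cgf' a t) /\ is_derive (cgf' a) t (cgf'' a t)
  /\ is_derive (cgf'' a) t (cgf''' a t).
Proof.
  intros Ht. assert (Hr := radius_on t ltac:(lra)).
  assert (Hm : 0 < mom a 0 t) by (pose proof (mom0_ge_1 t ltac:(lra) Hr); lra).
  split; [|split]; [apply is_derive_cgf|apply is_derive_cgf'|apply is_derive_cgf'']; auto.
Qed.

Lemma cgf'''_bounded : 0 <= U -> exists M, forall t, 0 <= t <= U -> Rabs (cgf''' a t) <= M.
Proof.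
  intros HU. destruct (continuity_ab_maj (fun t => Rabs (cgf''' a t)) 0 U HU) as (tM & HtM & _).
  - intros t Ht. apply (continuity_pt_comp (cgf''' a) Rabs), Rcontinuity_abs.
    assert (Hr := radius_on t ltac:(lra)).
    assert (Hm : 0 < mom a 0 t) by (pose proof (mom0_ge_1 t ltac:(lra) Hr); lra).
    destruct (ex_derive_cgf''' a t Hr Hm) as [l Hl]. exact (continuity_pt_is_derive _ _ _ Hl).
  - exists (Rabs (cgf''' a tM)). exact HtM.
Qed.

Lemma cgf_taylor2 M t : 0 <= t <= U -> (forall x, 0 <= x <= U -> Rabs (cgf''' a x) <= M) ->
  Rabs (cgf a t - cgf' a 0 * t - cgf'' a 0 * t ^ 2 / 2) <= M * t ^ 3.
Proof.
  intros Ht HM.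
  assert (H := taylor2_bound (cgf a) (cgf' a) (cgf'' a) (cgf''' a) t M).
  rewrite cgf_0, Rminus_0_r in H.
  apply H; [lra|intros x Hx; apply cgf_derivatives_on; lra|intros x Hx; apply HM; lra].
Qed.

End NormalizedPSeries.

Lemma Series_INR_mul (p : nat -> R) :
  Series (fun k => INR k * p k) = PSeries (PS_derive p) 1.
Proof.
  rewrite Series_incr_1_aux by (simpl; ring).
  apply Series_ext. intros k. unfold PS_derive. rewrite pow1. ring.
Qed.

Lemma Series_INR_mul_pred (p : nat -> R) :
  Series (fun k => INR k * (INR k - 1) * p k) = PSeries (PS_derive (PS_derive p)) 1.
Proof.
  rewrite !Series_incr_1_aux by (simpl; ring).
  apply Series_ext. intros k. unfold PS_derive. rewrite pow1, (S_INR (S k)). ring.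
Qed.

Lemma pmf_PSeries_1 (p : nat -> R) : is_pmf p -> PSeries p 1 = 1.
Proof.
  intros [_ Hp]. transitivity (Series p); [|apply is_series_unique, Hp].
  apply Series_ext. intros k. rewrite pow1. ring.
Qed.

Lemma pgf_mean_cgf' (p : nat -> R) : PSeries p 1 = 1 -> pgf_mean p = cgf' p 0.
Proof.
  intros Hp. rewrite cgf'_PSeries, exp_0, Hp. unfold pgf_mean. rewrite Series_INR_mul. field.
Qed.

Lemma pgf_var_cgf'' (p : nat -> R) : PSeries p 1 = 1 -> pgf_var p = cgf'' p 0.
Proof.
  intros Hp. unfold pgf_var, cgf''. rewrite pgf_mean_cgf', Series_INR_mul_pred by exact Hp.
  unfold cgf'. rewrite !mom0. unfold mom. simpl. rewrite exp_0, Hp. field.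
Qed.

(** * Roots of z^s = X(z)^n *)

Lemma pgf_RtoC (p : nat -> R) x : pgf p (RtoC x) = RtoC (PSeries p x).
Proof.
  unfold pgf, PSeries. apply injective_projections; cbn [fst snd RtoC].
  - apply Series_ext. intros k. rewrite <- RtoC_pow. reflexivity.
  - rewrite <- (Rmult_0_r (Series p)), <- Series_scal_r.
    apply Series_ext. intros k. rewrite <- RtoC_pow. reflexivity.
Qed.

Lemma pgf_deriv_RtoC (p : nat -> R) x :
  pgf_deriv p (RtoC x) = RtoC (PSeries (PS_derive p) x).
Proof.
  unfold pgf_deriv, PSeries, PS_derive. apply injective_projections; cbn [fst snd RtoC].
  - apply Series_ext. intros k. rewrite <- RtoC_pow. reflexivity.
  - rewrite <- (Rmult_0_r (Series (fun k => INR (S k) * p (S k)))), <- Series_scal_r.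
    apply Series_ext. intros k. rewrite <- RtoC_pow. reflexivity.
Qed.

Definition pgf_quotient (p : nat -> R) (s n : nat) (m : R) (z : C) : C :=
  Cdiv (Copp (RtoC (INR s - INR n * m)))
       (Cminus (Cmult (RtoC (INR s)) (Cpow z (s - 1)))
               (Cmult (Cmult (RtoC (INR n)) (Cpow (pgf p z) (n - 1))) (pgf_deriv p z))).

Definition is_minimal_root (p : nat -> R) (s n : nat) (Z0 : C) : Prop :=
  Cpow Z0 s = Cpow (pgf p Z0) n /\ 1 < Cmod Z0 /\ Rbar_lt (Cmod Z0) (CV_radius p) /\
  forall z : C, Cpow z s = Cpow (pgf p z) n ->
    1 < Cmod z -> Rbar_lt (Cmod z) (CV_radius p) -> Cmod Z0 <= Cmod z.

(* At a root, n X^(n-1) X' = x^(s-1) (n x X' / X): the denominator is x^(s-1) times -D. *)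
Lemma pgf_quotient_at_real_root (p : nat -> R) (s n : nat) m x D :
  (1 <= s)%nat -> (1 <= n)%nat -> 0 < x -> 0 < PSeries p x -> PSeries p x ^ n = x ^ s ->
  D = INR n * (x * PSeries (PS_derive p) x / PSeries p x) - INR s -> D <> 0 ->
  pgf_quotient p s n m (RtoC x)
  = Cmult (Cpow (Cinv (RtoC x)) (s - 1)) (RtoC ((INR s - INR n * m) / D)).
Proof.
  intros Hs Hn Hx HX Hroot HD_def HD. unfold pgf_quotient.
  destruct s as [|s]; [lia|]. destruct n as [|n]; [lia|].
  replace (S s - 1)%nat with s by lia. replace (S n - 1)%nat with n by lia.
  assert (Hxs : x ^ s <> 0) by (apply pow_nonzero; lra).
  assert (Eden : INR (S s) * x ^ s - INR (S n) * PSeries p x ^ n * PSeries (PS_derive p) x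
                 = - (x ^ s * D)).
  { simpl in Hroot. rewrite HD_def.
    replace (PSeries p x ^ n) with (x * x ^ s / PSeries p x) by (rewrite <- Hroot; field; lra).
    field. lra. }
  rewrite <- RtoC_inv by lra. rewrite pgf_RtoC, pgf_deriv_RtoC, <- !RtoC_pow.
  rewrite <- !RtoC_mult, <- RtoC_minus, Eden, <- RtoC_opp, <- RtoC_div.
  - f_equal. rewrite pow_inv. field. auto.
  - intros H. apply Ropp_eq_0_compat in H. rewrite Ropp_involutive in H.
    apply Rmult_integral in H. tauto.
Qed.

Section RealRoots.
Variable p : nat -> R.
Hypothesis p_nonneg : forall k, 0 <= p k.
Hypothesis p_total : PSeries p 1 = 1.
Variables s n : nat.

Lemma cgf_ln_gap x : 1 <= x -> Rbar_lt x (CV_radius p) ->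
  INR n * cgf p (ln x) - INR s * ln x = ln (PSeries p x ^ n) - ln (x ^ s).
Proof.
  intros Hx Hr. assert (HX := PSeries_ge_1 p p_nonneg p_total x Hx Hr).
  unfold cgf. rewrite mom0, exp_ln, !ln_pow by lra. reflexivity.
Qed.

Lemma pgf_root_of_cgf t : 0 <= t -> Rbar_lt (exp t) (CV_radius p) ->
  INR n * cgf p t = INR s * t -> Cpow (RtoC (exp t)) s = Cpow (pgf p (RtoC (exp t))) n.
Proof.
  intros Ht Hr Hroot.
  assert (Hx : 1 <= exp t) by (rewrite <- exp_0; apply exp_le_exp, Ht).
  assert (HX := PSeries_ge_1 p p_nonneg p_total _ Hx Hr).
  assert (Hgap := cgf_ln_gap _ Hx Hr). rewrite ln_exp in Hgap.
  rewrite pgf_RtoC, <- !RtoC_pow. f_equal.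
  apply ln_inv; [apply pow_lt; lra|apply pow_lt; lra|lra].
Qed.

Lemma cgf_crossing a b : 0 <= a < b -> Rbar_lt (exp b) (CV_radius p) ->
  INR n * cgf p a < INR s * a -> INR s * b < INR n * cgf p b ->
  exists t, a < t < b /\ INR n * cgf p t = INR s * t.
Proof.
  intros Hab Hr Ha Hb.
  destruct (Ranalysis5.IVT_interv (fun t => INR n * cgf p t - INR s * t) a b)
    as (t & Ht & Hroot); [|lra|lra|lra|].
  - intros x Hx. destruct (cgf_derivatives_on p p_nonneg p_total b Hr x ltac:(lra)) as [Hd _].
    apply (continuity_pt_is_derive _ x (INR n * cgf' p x - INR s)).
    apply (is_derive_minus _ (fun t => INR s * t)).
    + apply is_derive_scal, Hd.
    + auto_derive; [exact I|ring].
  - exists t. split; [|lra]. split; destruct (Req_dec t a); destruct (Req_dec t b); subst; lra.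
Qed.

End RealRoots.

Lemma pow_lt_pow_base a b k : 0 <= a < b -> (1 <= k)%nat -> a ^ k < b ^ k.
Proof.
  intros Hab Hk. destruct k as [|k]; [lia|]. simpl.
  assert (a ^ k <= b ^ k) by (apply pow_incr; lra).
  assert (0 < b ^ k) by (apply pow_lt; lra).
  nra.
Qed.

Section MinimalRoot.
Variable p : nat -> R.
Hypothesis p_nonneg : forall k, 0 <= p k.
Hypothesis p_total : PSeries p 1 = 1.
Hypothesis pgf_modulus_lt : forall (r1 : R) (z : C), 0 < r1 -> Rbar_lt r1 (CV_radius p) ->
  Cmod z = r1 -> z <> RtoC r1 -> Cmod (pgf p z) < pgfR p r1.
Variables (s n : nat) (Z0 : C).
Hypothesis n_pos : (1 <= n)%nat.
Hypothesis Z0_root : Cpow Z0 s = Cpow (pgf p Z0) n.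
Hypothesis Z0_gt_1 : 1 < Cmod Z0.
Hypothesis Z0_radius : Rbar_lt (Cmod Z0) (CV_radius p).
Hypothesis Z0_minimal : forall z : C, Cpow z s = Cpow (pgf p z) n ->
  1 < Cmod z -> Rbar_lt (Cmod z) (CV_radius p) -> Cmod Z0 <= Cmod z.

Lemma minimal_root_le t : 0 < t -> Rbar_lt (exp t) (CV_radius p) ->
  INR n * cgf p t = INR s * t -> Cmod Z0 <= exp t.
Proof.
  intros Ht Hr Hroot.
  assert (Hmod : Cmod (RtoC (exp t)) = exp t) by (rewrite Cmod_R; apply Rabs_pos_eq, Rlt_le, exp_pos).
  rewrite <- Hmod. apply Z0_minimal; rewrite ?Hmod; auto.
  - apply pgf_root_of_cgf; auto. lra.
  - rewrite <- exp_0. apply exp_increasing, Ht.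
Qed.

(* |Z0|^s = |X(Z0)|^n <= X(|Z0|)^n, so n k - s id >= 0 at ln |Z0|; strict inequality would
   give a smaller real root by the IVT, and equality forces Z0 to be real. *)
Lemma minimal_root_real ta : 0 < ta -> (forall t, 0 < t <= ta -> INR n * cgf p t < INR s * t) ->
  Z0 = RtoC (Cmod Z0) /\ INR n * cgf p (ln (Cmod Z0)) = INR s * ln (Cmod Z0).
Proof.
  intros Hta Hneg.
  assert (X_x0_ge_1 := PSeries_ge_1 p p_nonneg p_total _ (Rlt_le _ _ Z0_gt_1) Z0_radius).
  assert (gap_ln_x0 := cgf_ln_gap p p_nonneg p_total s n _ (Rlt_le _ _ Z0_gt_1) Z0_radius).
  set (x0 := Cmod Z0) in *.
  assert (HT : 0 < ln x0) by (rewrite <- ln_1; apply ln_increasing; lra).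
  assert (Hmod_le : Cmod (pgf p Z0) <= PSeries p x0).
  { destruct (classic (Z0 = RtoC x0)) as [E|Hne].
    - rewrite E, pgf_RtoC, Cmod_R, Rabs_pos_eq; lra.
    - left. apply (pgf_modulus_lt x0); auto. lra. }
  assert (Hpow_le : x0 ^ s <= PSeries p x0 ^ n).
  { unfold x0 at 1. rewrite <- Cmod_pow, Z0_root, Cmod_pow.
    apply pow_incr. split; [apply Cmod_ge_0|exact Hmod_le]. }
  assert (Hgap_nonneg : INR s * ln x0 <= INR n * cgf p (ln x0)).
  { assert (ln (x0 ^ s) <= ln (PSeries p x0 ^ n)); [|lra].
    destruct Hpow_le as [Hlt|Heq]; [left; apply ln_increasing; auto|right; now rewrite Heq].
    apply pow_lt. lra. }
  assert (Hta_lt : ta < ln x0).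
  { destruct (Rlt_le_dec ta (ln x0)) as [|Hle]; [auto|]. specialize (Hneg (ln x0)). lra. }
  assert (Hroot : INR n * cgf p (ln x0) = INR s * ln x0).
  { destruct Hgap_nonneg as [Hlt|]; [exfalso|auto].
    destruct (cgf_crossing p p_nonneg p_total s n ta (ln x0)) as (t & Ht & Htroot);
      [lra|rewrite exp_ln; auto; lra|apply Hneg; lra|auto|].
    assert (Hexp : exp t < x0) by (rewrite <- (exp_ln x0) by lra; apply exp_increasing; lra).
    assert (x0 <= exp t); [|lra].
    apply minimal_root_le; [lra| |exact Htroot].
    eapply Rbar_le_lt_trans; [|exact Z0_radius]. simpl. lra. }
  split; [|exact Hroot].
  destruct (classic (Z0 = RtoC x0)) as [E|Hne]; [exact E|exfalso].
  assert (Hlt : x0 ^ s < PSeries p x0 ^ n).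
  { unfold x0 at 1. rewrite <- Cmod_pow, Z0_root, Cmod_pow.
    apply pow_lt_pow_base; [|exact n_pos]. split; [apply Cmod_ge_0|].
    apply (pgf_modulus_lt x0); auto. lra. }
  assert (Heq : x0 ^ s = PSeries p x0 ^ n).
  { apply ln_inv; [apply pow_lt; lra|apply pow_lt; lra|lra]. }
  lra.
Qed.
End MinimalRoot.

(** * Asymptotics *)

Lemma Rabs_div_sub_1_le d D c : 0 < d -> 2 * c <= d -> Rabs (D - d) <= c ->
  Rabs (d / D - 1) <= 2 * c / d.
Proof.
  intros Hd Hc HD.
  assert (Hc0 : 0 <= c) by (pose proof (Rabs_pos (D - d)); lra).
  assert (HDd : d / 2 <= D) by (apply Rabs_le_between' in HD; lra).
  replace (d / D - 1) with ((d - D) / D) by (field; lra).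
  rewrite Rabs_div, (Rabs_pos_eq D), Rabs_minus_sym by lra.
  replace (2 * c / d) with (c / (d / 2)) by (field; lra).
  apply Rmult_le_compat; [apply Rabs_pos|left; apply Rinv_0_lt_compat; lra|exact HD|].
  apply Rinv_le_contravar; lra.
Qed.

Lemma eventually_sqrt_INR_gt (L : R) : exists S0 : nat, forall s : nat, (S0 <= s)%nat -> L < sqrt (INR s).
Proof.
  destruct (INR_unbounded (L ^ 2)) as [S0 HS0]. exists S0. intros s Hs.
  apply Rle_lt_trans with (Rabs L); [apply Rle_abs|].
  rewrite <- sqrt_Rsqr_abs, Rsqr_pow2. apply sqrt_lt_1_alt. split; [apply pow2_ge_0|].
  apply Rlt_le_trans with (INR S0); [exact HS0|apply le_INR, Hs].
Qed.

Lemma scaled_gap_bounds (s a g1 g2 : R) : 0 < s -> 0 <= g2 -> 2 * g2 <= sqrt s ->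
  g1 <= (1 - a / s) * sqrt s <= g2 ->
  g1 * sqrt s <= s - a <= g2 * sqrt s /\ (s - a) * sqrt s <= 2 * g2 * a.
Proof.
  intros Hs Hg2 Hw Hg. set (w := sqrt s) in *.
  assert (Hww : w * w = s) by (apply sqrt_sqrt; lra).
  assert (Hgap : (1 - a / s) * w * w = s - a) by (rewrite Rmult_assoc, Hww; field; lra).
  assert (Hwpos : 0 < w) by (apply sqrt_lt_R0, Hs).
  assert (Hlow : g1 * w <= s - a) by (rewrite <- Hgap; apply Rmult_le_compat_r; lra).
  assert (Hup : s - a <= g2 * w) by (rewrite <- Hgap; apply Rmult_le_compat_r; lra).
  split; [lra|].
  assert (Ha : s <= 2 * a) by nra.
  apply Rle_trans with (g2 * w * w); [apply Rmult_le_compat_r; lra|].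
  rewrite Rmult_assoc, Hww. nra.
Qed.

Section Asymptotics.
Variable p : nat -> R.
Hypothesis p_nonneg : forall k, 0 <= p k.
Hypothesis p_total : PSeries p 1 = 1.
Hypothesis pgf_modulus_lt : forall (r1 : R) (z : C), 0 < r1 -> Rbar_lt r1 (CV_radius p) ->
  Cmod z = r1 -> z <> RtoC r1 -> Cmod (pgf p z) < pgfR p r1.
Variables U M : R.
Hypothesis U_pos : 0 < U.
Hypothesis U_radius : Rbar_lt (exp U) (CV_radius p).
Hypothesis cgf'''_le : forall t, 0 <= t <= U -> Rabs (cgf''' p t) <= M.
Local Notation mu := (cgf' p 0).
Local Notation sg := (cgf'' p 0).
Hypothesis sg_pos : 0 < sg.

Let M_nonneg : 0 <= M.
Proof. pose proof (cgf'''_le 0 ltac:(lra)). pose proof (Rabs_pos (cgf''' p 0)). lra. Qed.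

Let cgf_taylor2_on t : 0 <= t <= U -> Rabs (cgf p t - mu * t - sg * t ^ 2 / 2) <= M * t ^ 3.
Proof. intros Ht. apply (cgf_taylor2 p p_nonneg p_total U U_radius); auto. Qed.

Lemma minimal_root_location (s n : nat) (Z0 : C) q :
  (1 <= n)%nat -> INR s = INR n * (mu + q) -> 0 < q -> 16 * M * q < sg ^ 2 -> 4 * q < U * sg ->
  is_minimal_root p s n Z0 ->
  exists u, Z0 = RtoC (exp u) /\ 0 < u < 4 * q / sg /\ INR n * cgf p u = INR s * u.
Proof.
  intros Hn Hs Hq HqM HqU (HZ0 & HZ1 & HZr & HZmin).
  assert (Hnpos : 0 < INR n) by (apply lt_0_INR; lia).
  set (ta := q / sg). set (t1 := 4 * q / sg).
  assert (Hta : 0 < ta) by (unfold ta; apply Rdiv_lt_0_compat; lra).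
  assert (Ht1 : t1 = 4 * ta) by (unfold t1, ta; field; lra).
  assert (Ht1U : t1 < U) by (unfold t1; apply Rmult_lt_reg_r with sg; [lra|]; field_simplify; lra).
  assert (Hbelow : forall t, 0 < t <= ta -> INR n * cgf p t < INR s * t).
  { intros t Ht. rewrite Hs, Rmult_assoc. apply Rmult_lt_compat_l; [exact Hnpos|].
    apply (below_line (cgf p) mu sg M U q sg_pos M_nonneg Hq cgf_taylor2_on);
      [exact Ht|lra|nra]. }
  assert (Habove : INR s * t1 < INR n * cgf p t1).
  { rewrite Hs, Rmult_assoc. apply Rmult_lt_compat_l; [exact Hnpos|].
    apply (above_line (cgf p) mu sg M U q sg_pos M_nonneg Hq cgf_taylor2_on); auto.
    unfold t1 in Ht1U. lra. }
  assert (Ht1r : Rbar_lt (exp t1) (CV_radius p))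
    by (apply (Rbar_le_lt_trans _ (exp U)); [apply exp_le_exp; lra|exact U_radius]).
  destruct (minimal_root_real p p_nonneg p_total pgf_modulus_lt s n Z0 Hn HZ0 HZ1 HZr HZmin ta Hta Hbelow)
    as [HZreal Hroot].
  destruct (cgf_crossing p p_nonneg p_total s n ta t1 ltac:(lra) Ht1r (Hbelow ta ltac:(lra)) Habove)
    as (ts & Hts & Htsroot).
  assert (Hle : Cmod Z0 <= exp ts).
  { apply (minimal_root_le p p_nonneg p_total s n Z0); auto; [lra|].
    apply (Rbar_le_lt_trans _ (exp t1)); [apply exp_le_exp; lra|exact Ht1r]. }
  exists (ln (Cmod Z0)). rewrite exp_ln by lra. split; [exact HZreal|split; [|exact Hroot]].
  split; [rewrite <- ln_1; apply ln_increasing; lra|].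
  apply Rle_lt_trans with ts; [|fold t1; lra].
  rewrite <- (ln_exp ts). apply ln_le; lra.
Qed.

Lemma cgf'_gap (s n : nat) u : 0 < u <= U -> INR n * cgf p u = INR s * u ->
  Rabs ((INR n * cgf' p u - INR s) - (INR s - INR n * mu)) <= INR n * M * u ^ 2.
Proof.
  intros Hu Hroot.
  assert (Htrap := trapezoid_bound (cgf p) (cgf' p) (cgf'' p) (cgf''' p) u M).
  rewrite cgf_0 in Htrap by auto.
  assert (Hu_gap : u * ((INR n * cgf' p u - INR s) - (INR s - INR n * mu))
                   = INR n * (u * (mu + cgf' p u) - 2 * (cgf p u - 0))) by nra.
  apply Rmult_le_reg_l with u; [lra|].
  rewrite <- (Rabs_pos_eq u) at 1 by lra. rewrite <- Rabs_mult, Hu_gap, Rabs_mult,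
    (Rabs_pos_eq (INR n)) by apply pos_INR.
  replace (u * (INR n * M * u ^ 2)) with (INR n * (M * u ^ 3)) by ring.
  apply Rmult_le_compat_l; [apply pos_INR|].
  apply Htrap; [lra|intros x Hx; apply (cgf_derivatives_on p p_nonneg p_total U U_radius); lra
    |intros x Hx; apply cgf'''_le; lra].
Qed.

Lemma minimal_root_expansion (s n : nat) (Z0 : C) q :
  (1 <= s)%nat -> (1 <= n)%nat -> INR s = INR n * (mu + q) ->
  0 < q -> 16 * M * q < sg ^ 2 -> 4 * q < U * sg ->
  2 * (16 * M * INR n * q ^ 2 / sg ^ 2) <= INR n * q ->
  is_minimal_root p s n Z0 ->
  exists E : C,
    pgf_quotient p s n mu Z0 = Cmult (Cpow (Cinv Z0) (s - 1)) (Cplus 1 E)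
    /\ Cmod E <= 2 * (16 * M * INR n * q ^ 2 / sg ^ 2) / (INR n * q).
Proof.
  intros Hs Hn Hsq Hq HqM HqU Hc HZ0.
  destruct (minimal_root_location s n Z0 q) as (u & -> & Hu & Hroot); auto.
  destruct HZ0 as (HZ0 & _ & HZr & _).
  assert (Hnpos : 0 < INR n) by (apply lt_0_INR; lia).
  set (c := 16 * M * INR n * q ^ 2 / sg ^ 2) in *.
  set (D := INR n * cgf' p u - INR s).
  assert (HDc : Rabs (D - INR n * q) <= c).
  { replace (INR n * q) with (INR s - INR n * mu) by lra.
    apply Rle_trans with (INR n * M * u ^ 2).
    - apply cgf'_gap; auto. split; [lra|]. apply Rlt_le, Rlt_trans with (4 * q / sg); [lra|].
      apply Rmult_lt_reg_r with sg; [lra|]. field_simplify; lra.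
    - unfold c. replace (16 * M * INR n * q ^ 2 / sg ^ 2) with (INR n * M * (4 * q / sg) ^ 2)
        by (field; lra).
      apply Rmult_le_compat_l; [nra|]. apply pow_incr. lra. }
  assert (HX : 1 <= PSeries p (exp u)).
  { apply PSeries_ge_1; auto; [left; rewrite <- exp_0; apply exp_increasing; lra|].
    rewrite Cmod_R, Rabs_pos_eq in HZr by (left; apply exp_pos). exact HZr. }
  assert (Hpow : PSeries p (exp u) ^ n = exp u ^ s).
  { rewrite pgf_RtoC, <- !RtoC_pow in HZ0. apply (f_equal Re) in HZ0. rewrite !re_RtoC in HZ0. auto. }
  assert (HD : INR n * q / 2 <= D) by (apply Rabs_le_between' in HDc; lra).
  exists (RtoC (INR n * q / D - 1)). split.
  - rewrite (pgf_quotient_at_real_root p s n mu (exp u) D); auto;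
      [|apply exp_pos|lra|now rewrite <- cgf'_PSeries|nra].
    f_equal. rewrite <- RtoC_plus. f_equal. replace (INR s - INR n * mu) with (INR n * q) by lra. ring.
  - rewrite Cmod_R. apply Rabs_div_sub_1_le; auto. nra.
Qed.

(* [q sqrt s <= 2 mu g2] bounds the error term 16 M n q^2 / sigma^4 of the expansion by C0. *)
Lemma minimal_root_scaled_expansion g1 g2 (s n : nat) (Z0 : C) :
  0 < g1 -> g1 <= g2 -> (1 <= s)%nat -> (1 <= n)%nat ->
  let w := sqrt (INR s) in
  let C0 := 32 * M * mu * g2 ^ 2 / sg ^ 2 in
  2 * g2 < w -> 32 * M * mu * g2 < w * sg ^ 2 -> 8 * mu * g2 < w * (U * sg) -> 2 * C0 < w * g1 ->
  g1 <= (1 - INR n * mu / INR s) * w <= g2 ->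
  is_minimal_root p s n Z0 ->
  exists E : C,
    pgf_quotient p s n mu Z0 = Cmult (Cpow (Cinv Z0) (s - 1)) (Cplus 1 E)
    /\ Cmod E <= 2 * C0 / g1 / w.
Proof.
  intros Hg1 Hg12 Hs Hn w C0 Hw1 Hw2 Hw3 Hw4 Hgap HZ0.
  assert (Hspos : 0 < INR s) by (apply lt_0_INR; lia).
  assert (Hnpos : 0 < INR n) by (apply lt_0_INR; lia).
  destruct (scaled_gap_bounds (INR s) (INR n * mu) g1 g2 Hspos ltac:(lra) (Rlt_le _ _ Hw1) Hgap)
    as ([Hlow Hup] & Hscale).
  fold w in Hlow, Hup, Hscale.
  set (q := (INR s - INR n * mu) / INR n).
  assert (Hnq : INR n * q = INR s - INR n * mu) by (unfold q; field; lra).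
  assert (Hqw : q * w <= 2 * mu * g2).
  { apply Rmult_le_reg_l with (INR n); [lra|]. rewrite <- Rmult_assoc, Hnq. lra. }
  assert (Hq : 0 < q) by (apply Rmult_lt_reg_l with (INR n); [lra|]; nra).
  assert (HqM : 16 * M * q < sg ^ 2).
  { apply Rmult_lt_reg_r with w; [lra|].
    apply Rle_lt_trans with (16 * M * (2 * mu * g2)); [|lra].
    rewrite Rmult_assoc. apply Rmult_le_compat_l; [lra|exact Hqw]. }
  assert (HqU : 4 * q < U * sg) by (apply Rmult_lt_reg_r with w; lra).
  set (c := 16 * M * INR n * q ^ 2 / sg ^ 2).
  assert (Hc0 : 0 <= c).
  { unfold c. apply Rmult_le_pos; [|apply Rlt_le, Rinv_0_lt_compat; nra].
    apply Rmult_le_pos; [apply Rmult_le_pos; lra|apply pow2_ge_0]. }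
  assert (Hc : c <= C0).
  { unfold c, C0, Rdiv. apply Rmult_le_compat_r; [apply Rlt_le, Rinv_0_lt_compat; nra|].
    replace (16 * M * INR n * q ^ 2) with (16 * M * ((INR n * q) * q)) by ring.
    replace (32 * M * mu * g2 ^ 2) with (16 * M * (g2 * (2 * mu * g2))) by ring.
    apply Rmult_le_compat_l; [lra|]. rewrite Hnq.
    apply Rle_trans with (g2 * w * q); [apply Rmult_le_compat_r; lra|]. nra. }
  destruct (minimal_root_expansion s n Z0 q Hs Hn ltac:(lra) Hq HqM HqU ltac:(fold c; lra) HZ0)
    as (E & HE & HEbound).
  exists E. split; [exact HE|]. fold c in HEbound. rewrite Hnq in HEbound.
  apply Rle_trans with (2 * c / (INR s - INR n * mu)); [exact HEbound|].
  replace (2 * C0 / g1 / w) with (2 * C0 / (g1 * w)) by (field; lra).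
  apply Rmult_le_compat; [lra|apply Rlt_le, Rinv_0_lt_compat; lra|lra|].
  apply Rinv_le_contravar; nra.
Qed.

Lemma minimal_root_asymptotics g1 g2 : 0 < g1 -> g1 <= g2 ->
  exists (K : R) (S0 : nat),
    forall (s n : nat) (Z0 : C),
      (S0 <= s)%nat -> (1 <= s)%nat -> (1 <= n)%nat ->
      g1 <= (1 - INR n * mu / INR s) * sqrt (INR s) <= g2 ->
      is_minimal_root p s n Z0 ->
      exists E : C,
        pgf_quotient p s n mu Z0 = Cmult (Cpow (Cinv Z0) (s - 1)) (Cplus 1 E)
        /\ Cmod E <= K / sqrt (INR s).
Proof.
  intros Hg1 Hg12.
  set (C0 := 32 * M * mu * g2 ^ 2 / sg ^ 2).
  destruct (eventually_sqrt_INR_gt (Rmax (2 * g2) (Rmax (32 * M * mu * g2 / sg ^ 2)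
              (Rmax (8 * mu * g2 / (U * sg)) (2 * C0 / g1))))) as [S0 HS0].
  exists (2 * C0 / g1), S0. intros s n Z0 HS Hs Hn Hgap HZ0.
  specialize (HS0 s HS).
  apply (minimal_root_scaled_expansion g1 g2); auto.
  - eapply Rle_lt_trans, HS0. apply Rmax_l.
  - apply Rlt_div_l; [nra|]. eapply Rle_lt_trans, HS0. eapply Rle_trans, Rmax_r; apply Rmax_l.
  - apply Rlt_div_l; [nra|]. eapply Rle_lt_trans, HS0.
    eapply Rle_trans, Rmax_r; eapply Rle_trans, Rmax_r; apply Rmax_l.
  - apply Rlt_div_l; [lra|]. eapply Rle_lt_trans, HS0.
    eapply Rle_trans, Rmax_r; eapply Rle_trans, Rmax_r; apply Rmax_r.
Qed.

End Asymptotics.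

Theorem lemma3p3 :
  forall p : nat -> R,
    is_pmf p ->
    Rbar_lt 1 (CV_radius p) ->
    0 < pgf_mean p ->
    0 < pgf_var p ->
    (forall (r1 : R) (z : C), 0 < r1 -> Rbar_lt r1 (CV_radius p) ->
        Cmod z = r1 -> z <> RtoC r1 -> Cmod (pgf p z) < pgfR p r1) ->
  forall gamma1 gamma2 : R, 0 < gamma1 -> gamma1 <= gamma2 ->
  exists (K : R) (S0 : nat),
    forall (s n : nat) (Z0 : C),
      (S0 <= s)%nat -> (1 <= s)%nat -> (1 <= n)%nat ->
      INR n * pgf_mean p < INR s ->
      pgf_deg_gt p (INR s / INR n) ->
      gamma1 <= (1 - INR n * pgf_mean p / INR s) * sqrt (INR s) <= gamma2 ->
      (* Z0 : zero of z^s - X(z)^n of minimal modulus in 1 < |z| < r *)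
      Cpow Z0 s = Cpow (pgf p Z0) n ->
      1 < Cmod Z0 -> Rbar_lt (Cmod Z0) (CV_radius p) ->
      (forall z : C, Cpow z s = Cpow (pgf p z) n ->
          1 < Cmod z -> Rbar_lt (Cmod z) (CV_radius p) -> Cmod Z0 <= Cmod z) ->
      exists E : C,
        Cdiv (Copp (RtoC (INR s - INR n * pgf_mean p)))
             (Cminus (Cmult (RtoC (INR s)) (Cpow Z0 (s - 1)))
                     (Cmult (Cmult (RtoC (INR n)) (Cpow (pgf p Z0) (n - 1)))
                            (pgf_deriv p Z0)))
        = Cmult (Cpow (Cinv Z0) (s - 1)) (Cplus 1 E)
        /\ Cmod E <= K / sqrt (INR s).
Proof.
  intros p Hpmf Hr _ Hvar Hmod gamma1 gamma2 Hg1 Hg12.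
  assert (Htotal := pmf_PSeries_1 p Hpmf).
  assert (Hnonneg := proj1 Hpmf).
  rewrite pgf_mean_cgf', pgf_var_cgf'' in * by exact Htotal.
  destruct (exists_exp_lt_radius p Hr) as (U & HU & HUr).
  destruct (cgf'''_bounded p Hnonneg Htotal U HUr (Rlt_le _ _ HU)) as (M & HM).
  destruct (minimal_root_asymptotics p Hnonneg Htotal Hmod U M HU HUr HM Hvar gamma1 gamma2 Hg1 Hg12)
    as (K & S0 & HK).
  exists K, S0. intros s n Z0 HS Hs Hn _ _ Hgap HZ0 HZ1 HZr HZmin.
  exact (HK s n Z0 HS Hs Hn Hgap (conj HZ0 (conj HZ1 (conj HZr HZmin)))).
Qed.
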